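(* Let $\mathcal{T}\subset\mathbb{R}$ be a compact interval of positive length, let $y_1,\dots,y_n$ and $g$ be continuous real functions on $\mathcal{T}$, and let $\alpha\in[1/(l+1),1)$. Define $k$, $\mathcal{H}_2$ and $M$ as in the context, and assume $M(t)>0$ for all $t\in\mathcal{T}$. Set $$\bar s^c(t):=\frac{M(t)}{\int_{\mathcal{T}}M(u)\,du}.$$ Then $$k^{\bar s^c}=\int_{\mathcal{T}}M(t)\,dt.$$
   Context: $\{1,\dots,n\}$ is partitioned into $\mathcal{I}_1$ with $|\mathcal{I}_1|=m\ge1$ and $\mathcal{I}_2$ with $|\mathcal{I}_2|=l\ge1$. Put $r:=\lceil (l+1)(1-\alpha)\rceil$. Let $k$ be the $r$-th smallest value of the multiset $\{\sup_{t\in\mathcal{T}}|y_h(t)-g(t)|:h\in\mathcal{I}_2\}$. Define $$\mathcal{H}_2:=\{j\in\mathcal{I}_2:\sup_{t\in\mathcal{T}}|y_j(t)-g(t)|\le k\},\qquad M(t):=\max_{j\in\mathcal{H}_2}|y_j(t)-g(t)|.$$ For any bounded function $u:\mathcal{T}\to(0,\infty)$, define the scores $R^u_h:=\sup_{t\in\mathcal{T}}|y_h(t)-g(t)|/u(t)$ for $h\in\mathcal{I}_2$, and let $k^u$ be the $r$-th smallest value of the multiset $\{R^u_h:h\in\mathcal{I}_2\}$. *)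

From HB Require Import structures.
From mathcomp Require Import all_boot all_order all_algebra.
From mathcomp Require Import all_classical all_reals all_analysis.
Set Implicit Arguments. Unset Strict Implicit. Unset Printing Implicit Defensive.
Import Order.TTheory GRing.Theory Num.Theory numFieldNormedType.Exports.
Local Open Scope classical_set_scope.
Local Open Scope ring_scope.

Section Defs.
Variable R : realType.

Definition supT (a b : R) (f : R -> R) : R := sup [set f t | t in `[a, b]].

(* r-th smallest value (r >= 1) of the multiset s *)
Definition kth_smallest (s : seq R) (r : nat) : R := nth 0 (sort <=%R s) r.-1.

Definition rank_r (l : nat) (alpha : R) : nat := `|Num.ceil ((l.+1)%:R * (1 - alpha))|%N.

Variables (n : nat) (a b : R) (y : 'I_n -> R -> R) (g : R -> R) (I2 : {set 'I_n}) (alpha : R).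

Definition score (h : 'I_n) : R := supT a b (fun t => `|y h t - g t|).

Definition kval : R := kth_smallest [seq score h | h <- enum I2] (rank_r #|I2| alpha).

Definition H2 : {set 'I_n} := [set j in I2 | score j <= kval].

(* M(t) = max_{j in H2} |y_j(t) - g(t)| (values are >= 0 and H2 is nonempty) *)
Definition Mfun (t : R) : R := \big[Order.max/0]_(j in H2) `|y j t - g t|.

Definition score_u (u : R -> R) (h : 'I_n) : R := supT a b (fun t => `|y h t - g t| / u t).

Definition kval_u (u : R -> R) : R :=
  kth_smallest [seq score_u u h | h <- enum I2] (rank_r #|I2| alpha).

End Defs.

From HB Require Import structures.
From mathcomp Require Import all_boot all_order all_algebra.
From mathcomp Require Import all_classical all_reals all_analysis.
From mathcomp Require Import lra.
Import Order.TTheory GRing.Theory Num.Theory numFieldNormedType.Exports.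
Local Open Scope classical_set_scope.
Local Open Scope ring_scope.

(* Write R_h for the plain scores, k for their r-th smallest value, M for the
   envelope of the residuals |y_j - g|, j in H2, and c for the (positive)
   integral of M; the weight is u = M / c.  By the extreme value theorem every
   score is the maximum of a continuous function on [a, b].
   - If h in I2 and R_h <= k, then h in H2, so |y_h - g| <= M pointwise and
     R^u_h <= c.
   - If R_h >= k, then at a point t where |y_h - g| attains R_h we have
     |y_h - g|(t) >= k >= M(t), hence R^u_h >= c.
   Since M is continuous and positive, c > 0.  Thus h |-> R^u_h maps the scores below/above the r-th order statistic k to
   values below/above c, and a transfer lemma for order statistics shows that
   the r-th smallest R^u_h is exactly c. *)

Lemma sub_in_count {T : eqType} (p q : pred T) (s : seq T) :
  {in s, forall x, p x -> q x} -> (count p s <= count q s)%N.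
Proof.
move=> pq; rewrite (@eq_in_count _ p (predI p q)) ?sub_count // => [x /andP[]//|].
by move=> x xs /=; case px: (p x); rewrite //= pq.
Qed.

Section OrderStatistics.
Context {R : realType}.
Implicit Types (s : seq R) (r : nat) (v : R).

Lemma kth_smallest_count {s r} : (0 < r <= size s)%N ->
  (count (fun z => z < kth_smallest s r)%R s < r)%N /\
  (r <= count (fun z => z <= kth_smallest s r)%R s)%N.
Proof.
case/andP=> r_gt0 r_le; rewrite /kth_smallest.
have count_s p : count p s = count p (sort <=%R s) by rewrite count_sort.
rewrite !count_s.
set t := sort _ s; have t_sorted : sorted <=%R t := sort_sorted le_total s.
have r_lt : (r.-1 < size t)%N by rewrite size_sort prednK.
case: r r_gt0 r_le r_lt => // r _ _ r_lt /=.
split; rewrite ltnNge ?ltnS; apply/negP.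
- by move=> /(nth_count_lt 0 t_sorted); rewrite ltxx.
- move=> le_cnt.
  have := @nth_count_gt _ _ (nth 0 t r) 0 t r t_sorted.
  by rewrite le_cnt r_lt ltxx => /(_ isT).
Qed.

Lemma kth_smallest_eq s r v : (0 < r)%N ->
  (count (fun z => z < v)%R s < r)%N -> (r <= count (fun z => z <= v)%R s)%N ->
  kth_smallest s r = v.
Proof.
case: r => // r _ lt_v le_v; rewrite /kth_smallest /=.
by apply: (nth_count_eq 0 (sort_sorted le_total s)); rewrite !count_sort -ltnS lt_v.
Qed.

Lemma kth_smallest_mem s r : (0 < r <= size s)%N -> kth_smallest s r \in s.
Proof.
case/andP=> r_gt0 r_le; rewrite /kth_smallest -(mem_sort <=%R).
by apply: mem_nth; rewrite size_sort prednK.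
Qed.

Lemma kth_smallest_transfer (T : eqType) (s : seq T) (f g : T -> R) r v :
  (0 < r <= size s)%N ->
  {in s, forall x, f x <= kth_smallest (map f s) r -> g x <= v} ->
  {in s, forall x, kth_smallest (map f s) r <= f x -> v <= g x} ->
  kth_smallest (map g s) r = v.
Proof.
move=> r_bd below above.
have r_bd_map : (0 < r <= size (map f s))%N by rewrite size_map.
have [lt_k le_k] := kth_smallest_count r_bd_map.
apply: kth_smallest_eq; first by case/andP: r_bd.
- apply: leq_ltn_trans lt_k; rewrite !count_map; apply: sub_in_count => x xs /=.
  by apply: contraTT; rewrite -!leNgt; exact: above.
- apply: leq_trans le_k _; rewrite !count_map; apply: sub_in_count => x xs /=.
  exact: below.
Qed.

End OrderStatistics.

Lemma rank_r_bounds {R : realType} {l : nat} {alpha : R} :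
  1 / (l.+1)%:R <= alpha -> alpha < 1 -> (0 < rank_r l alpha <= l)%N.
Proof.
move=> alpha_ge alpha_lt1; rewrite /rank_r.
set x := (l.+1)%:R * (1 - alpha).
have l1_gt0 : (0 : R) < (l.+1)%:R by rewrite ltr0n.
have x_gt0 : 0 < x by rewrite /x mulr_gt0 // subr_gt0.
have x_le : x <= l%:R.
  have : 1 <= (l.+1)%:R * alpha by rewrite -ler_pdivrMl // mulr1 -[_^-1]mul1r.
  rewrite /x mulrBr mulr1 -natr1; lra.
have : (0 < Num.ceil x)%R by rewrite ceil_gt0.
have : (Num.ceil x <= l%:Z)%R by rewrite ceil_le_int.
by case: (Num.ceil x) => [m|//]; rewrite lez_nat ltz_nat => -> ->.
Qed.

Section ContinuousFunctions.
Context {R : realType}.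

Lemma supT_attained {a b : R} {f : R -> R} :
  a <= b -> {within `[a, b], continuous f} ->
  exists2 c, a <= c <= b & supT a b f = f c /\ forall t, a <= t <= b -> f t <= f c.
Proof.
move=> ab cf; have [c c_ab c_max] := EVT_max ab cf.
have c_in : a <= c <= b by move: c_ab; rewrite in_itv.
exists c => //; split; last by move=> t t_ab; apply: c_max; rewrite in_itv.
apply/eqP; rewrite eq_le; apply/andP; split.
  apply: ge_sup; first by exists (f c), c; rewrite //= in_itv.
  by move=> _ [t t_ab <-]; apply: c_max.
apply: ub_le_sup; last by exists c; rewrite //= in_itv.
by exists (f c) => _ [t t_ab <-]; apply: c_max.
Qed.

Lemma within_continuous_absB (A : set R) (f g : R -> R) :
  {within A, continuous f} -> {within A, continuous g} ->
  {within A, continuous (fun t => `|f t - g t|)}.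
Proof. by move=> cf cg x; apply: cvg_norm; apply: cvgB; [exact: cf | exact: cg]. Qed.

Lemma within_continuous_bigmax (A : set R) (I : Type) (s : seq I) (P : pred I)
    (F : I -> R -> R) :
  (forall i, {within A, continuous (F i)}) ->
  {within A, continuous (fun t => \big[Order.max/0]_(j <- s | P j) F j t)}.
Proof.
move=> cF; elim: s => [|i s IH].
  by under eq_fun do rewrite big_nil; exact: cst_continuous.
under eq_fun do rewrite big_cons.
by case: (P i) => // x; apply: continuous_max; [exact: cF | exact: IH].
Qed.

Lemma within_continuous_div (A : set R) (f u : R -> R) :
  {within A, continuous f} -> {within A, continuous u} ->
  (forall t, A t -> u t != 0) -> {within A, continuous (fun t => f t / u t)}.
Proof.
move=> cf cu u_neq0; rewrite continuous_subspace_in => x /set_mem Ax.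
by apply: cvgM; [exact: cf | apply: cvgV; [exact: u_neq0 | exact: cu]].
Qed.

(* The integral over [a, b] (a < b) of a continuous positive function is
   positive: it dominates the minimum times b - a. *)
Lemma Rintegral_continuous_gt0 {a b : R} {f : R -> R} :
  a < b -> {within `[a, b], continuous f} -> (forall t, a <= t <= b -> 0 < f t) ->
  0 < Rintegral lebesgue_measure `[a, b] f.
Proof.
move=> ab cf f_gt0; have [c c_ab c_min] := EVT_min (ltW ab) cf.
have fc_gt0 : 0 < f c by move: c_ab; rewrite in_itv => /f_gt0.
apply: (@lt_le_trans _ _ (Rintegral lebesgue_measure `[a, b] (fun=> f c))).
  rewrite Rintegral_cst //; have := lebesgue_measure_itv `[a, b].
  by rewrite /= lte_fin ab -EFinB => ->; rewrite /= mulr_gt0 ?subr_gt0.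
apply: le_Rintegral => //.
- by apply: continuous_compact_integrable; [exact: segment_compact | exact: cst_continuous].
- by apply: continuous_compact_integrable; [exact: segment_compact | exact: cf].
Qed.

End ContinuousFunctions.

Lemma div_normalized_le {R : realFieldType} (x m c : R) :
  0 < m -> 0 < c -> x <= m -> x / (m / c) <= c.
Proof. by move=> m_gt0 c_gt0 xm; rewrite invf_div mulrA ler_pdivrMr //; nra. Qed.

Lemma div_normalized_ge {R : realFieldType} (x m c : R) :
  0 < m -> 0 < c -> m <= x -> c <= x / (m / c).
Proof. by move=> m_gt0 c_gt0 mx; rewrite invf_div mulrA ler_pdivlMr //; nra. Qed.

Section NormalizedScores.
Context {R : realType} {n : nat} {a b : R} {y : 'I_n -> R -> R} {g : R -> R}.
Variables (I2 : {set 'I_n}) (alpha : R).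
Hypothesis ab : a <= b.
Hypothesis y_cont : forall i, {within `[a, b], continuous (y i)}.
Hypothesis g_cont : {within `[a, b], continuous g}.

Local Notation score := (score a b y g).
Local Notation k := (kval a b y g I2 alpha).
Local Notation H2 := (H2 a b y g I2 alpha).
Local Notation M := (Mfun a b y g I2 alpha).

Lemma residual_continuous h : {within `[a, b], continuous (fun t => `|y h t - g t|)}.
Proof. exact: within_continuous_absB. Qed.

Lemma Mfun_continuous : {within `[a, b], continuous M}.
Proof. by apply: within_continuous_bigmax => j; exact: residual_continuous. Qed.

Lemma residual_le_score h t : a <= t <= b -> `|y h t - g t| <= score h.
Proof.
move=> t_ab; have [c _ [score_c c_max]] := supT_attained ab (residual_continuous h).
by rewrite /score score_c; exact: c_max.
Qed.

Lemma residual_le_Mfun j t : j \in H2 -> `|y j t - g t| <= M t.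
Proof. by move=> jH; exact: (le_bigmax_cond 0 (fun j => `|y j t - g t|) jH). Qed.

(* Since r is a valid rank, k is one of the (nonnegative) scores. *)
Lemma kval_ge0 : (0 < rank_r #|I2| alpha <= #|I2|)%N -> 0 <= k.
Proof.
move=> r_bd; have : k \in [seq score h | h <- enum I2].
  by apply: kth_smallest_mem; rewrite size_map -cardE.
case/mapP=> h _ ->; have a_ab : a <= a <= b by rewrite lexx ab.
exact: le_trans (normr_ge0 _) (residual_le_score h a a_ab).
Qed.

(* Every curve of H2 has score at most k, so M is bounded by k on [a, b]. *)
Lemma Mfun_le_kval t : 0 <= k -> a <= t <= b -> M t <= k.
Proof.
move=> k_ge0 t_ab; apply: bigmax_le => // j; rewrite inE => /andP[_ jk].
exact: le_trans (residual_le_score j t t_ab) jk.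
Qed.

Context {c : R}.
Hypothesis c_gt0 : 0 < c.
Hypothesis M_gt0 : forall t, a <= t <= b -> 0 < M t.

Let u t := M t / c.

Lemma normalized_residual_continuous h :
  {within `[a, b], continuous (fun t => `|y h t - g t| / u t)}.
Proof.
apply: within_continuous_div; first exact: residual_continuous.
  by move=> x; apply: cvgM; [exact: Mfun_continuous | exact: cvg_cst].
by move=> t /=; rewrite in_itv => /M_gt0 Mt; rewrite mulf_neq0 ?invr_eq0 ?gt_eqF.
Qed.

Lemma score_u_le h : h \in I2 -> score h <= k -> score_u a b y g u h <= c.
Proof.
move=> hI hk; have [t t_ab [score_t _]] := supT_attained ab (normalized_residual_continuous h).
rewrite /score_u score_t.
apply: div_normalized_le => //; first exact: M_gt0.
by apply: residual_le_Mfun; rewrite inE hI hk.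
Qed.

Lemma score_u_ge h : 0 <= k -> k <= score h -> c <= score_u a b y g u h.
Proof.
move=> k_ge0 hk; have [t t_ab [score_t _]] := supT_attained ab (residual_continuous h).
have [s _ [score_s s_max]] := supT_attained ab (normalized_residual_continuous h).
rewrite /score_u score_s.
apply: le_trans (s_max t t_ab); apply: div_normalized_ge => //; first exact: M_gt0.
by rewrite -score_t; exact: le_trans (Mfun_le_kval t k_ge0 t_ab) hk.
Qed.

End NormalizedScores.

Theorem mainTheorem5 (R : realType) (n : nat) (a b : R) (y : 'I_n -> R -> R) (g : R -> R)
    (I2 : {set 'I_n}) (alpha : R) :
  a < b ->
  (forall i : 'I_n, {within `[a, b]%classic, continuous (y i : R -> R)}) ->
  {within `[a, b]%classic, continuous (g : R -> R)} ->
  (0 < #|~: I2|)%N ->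
  (0 < #|I2|)%N ->
  1 / (#|I2|.+1)%:R <= alpha -> alpha < 1 ->
  (forall t, a <= t <= b -> 0 < Mfun a b y g I2 alpha t) ->
  kval_u a b y g I2 alpha
    (fun t => Mfun a b y g I2 alpha t /
              Rintegral lebesgue_measure `[a, b] (Mfun a b y g I2 alpha))
  = Rintegral lebesgue_measure `[a, b] (Mfun a b y g I2 alpha).
Proof.
move=> lt_ab y_cont g_cont _ _ alpha_ge alpha_lt1 M_gt0.
have ab := ltW lt_ab.
have I_gt0 := Rintegral_continuous_gt0 lt_ab (Mfun_continuous I2 alpha y_cont g_cont) M_gt0.
have r_bd := rank_r_bounds alpha_ge alpha_lt1.
have k_ge0 := kval_ge0 I2 alpha ab y_cont g_cont r_bd.
apply: kth_smallest_transfer; first by rewrite -cardE.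
- by move=> h; rewrite mem_enum => hI; exact: score_u_le.
- by move=> h _; exact: score_u_ge.
Qed.
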